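(* Let $\mathcal C$ be a category with a zero object and finite coproducts, $X$ an object of $\mathcal C$, and $r\in End_{\mathcal C}(X)[2]=Hom_{\mathcal C}(X,X\sqcup X)$ a formal difference law in the endomorphism $\Gamma$-ring $End_{\mathcal C}(X)$. Then $w=p^3_2\circ p^4_2(r^2)\in Hom_{\mathcal C}(X,X\sqcup X)$ is the coaddition of an abelian cogroup object structure on $X$ whose co-inverse is $p^2_1(r)\in Hom_{\mathcal C}(X,X)$ (and whose counit is the zero morphism, $s^2_{1,2,1}(r)=0$). Moreover, the multiplicative map $H\mathbb Z\to End_{\mathcal C}(X)$ determined by $r$ (with $\pm1_n\mapsto r^n$) coincides with the map associated to this abelian cogroup structure, namely at $[k]$ the additive extension $\tilde{\mathbb Z}[k]\to Hom_{\mathcal C}(X,X\wedge[k])$ of the map sending $i\in\{1,\dots,k\}$ to the $i$-th coproduct inclusion $X\to X\wedge[k]$ (addition in $Hom_{\mathcal C}(X,X\wedge[k])$ being induced by the cogroup structure).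
   Context: Let $[n]=\{0,1,\dots,n\}$, pointed at $0$. A $\Gamma$-space is a functor $F$ from the finite pointed sets $[n]$ (with pointed maps) to pointed simplicial sets with $F[0]$ a point; for a pointed map $f$ we write $f$ also for $F(f)$; $\Sigma_n$ acts on $F[n]$ via permutations of $\{1,\dots,n\}$. We identify $[n]\wedge[m]$ with $[nm]$ via $i\wedge j\mapsto (j-1)n+i$. A $\Gamma$-ring is a $\Gamma$-space $R$ with unit $1\in R[1]$ and associative unital multiplication given by natural maps $R(K)\wedge R(L)\to R(K\wedge L)$, $p\wedge q\mapsto pq$; $0\in R[1]$ denotes the basepoint. For $x\in R[2]$, $x^k\in R[2^k]$ is the $k$-fold product. For $\mathcal C$ with zero object and finite coproducts, $X\wedge[k]=X\sqcup\dots\sqcup X$ ($k$ copies; indexed by $\{1,\dots,k\}$, $X\wedge[0]=0$), functorial in pointed maps of $[k]$ (index $0$ going to the zero object). The endomorphism $\Gamma$-ring is $End_{\mathcal C}(X)[k]=Hom_{\mathcal C}(X,X\wedge[k])$ (pointed at the zero map), with unit $\mathrm{id}_X\in End_{\mathcal C}(X)[1]$ and multiplication $f\wedge g\mapsto (f\wedge[l])\circ g$ for $f\in End_{\mathcal C}(X)[k]$, $g\in End_{\mathcal C}(X)[l]$. Maps: $p^n_i:[n]\to[n-1]$, $p^n_i(j)=j$ ($j<i$), $p^n_i(i)=0$, $p^n_i(j)=j-1$ ($j>i$); for $1\le i<j\le n$ and $1\le k\le n-1$, $s^n_{i,j,k}:[n]\to[n-1]$ sends $0\mapsto0$, $i,j\mapsto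 k$, and the remaining elements order-preservingly and bijectively onto $\{1,\dots,n-1\}\setminus\{k\}$; $d^n_j:[n-1]\to[n]$ is the order-preserving injection missing $j$. $H\mathbb{Z}$ is the $\Gamma$-ring with $H\mathbb{Z}(K)=\tilde{\mathbb Z}[K]$ the reduced free abelian group on $K$, pointed maps acting by summing coefficients along fibres, unit the inclusion of generators, multiplication $(\sum a_k k)(\sum b_l l)=\sum a_kb_l (k\wedge l)$; $\pm1_n=(1,-1)^n\in H\mathbb{Z}[2^n]$. For $k\ge1$, split $\{1,\dots,2^k\}=A_+\sqcup A_-$ where $i\in A_+$ iff the binary expansion of $i-1$ has an even number of digits $1$. The special action of $\Sigma_{2^{k-1}}\times\Sigma_{2^{k-1}}$ on $F[2^k]$ is the action of the group of permutations of $\{1,\dots,2^k\}$ preserving $A_+$ and $A_-$. Let $\sigma$ be the nontrivial element of $\Sigma_2$. A formal difference law in $R$ is $r\in R[2]$ such that: (1) $p^2_2(r)=1$ and $s^2_{1,2,1}(r)=0$; (2) $p^2_1(r)\,r=r\,p^2_1(r)=\sigma(r)$ in $R[2]$; (3) for every $k\ge1$, $r^k$ is fixed under the special action; (4) for every $k\ge1$, all $1\le i<j\le 2^k$ with one of $i,j$ in $A_+$ and the other in $A_-$, and all $1\le l\le 2^k-1$: $s^{2^k}_{i,j,l}(r^k)=d^{2^k-1}_l\,p^{2^k-1}_i\,p^{2^k}_j(r^k)$. *)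

From HB Require Import structures.
From mathcomp Require Import all_boot all_order all_algebra.
Unset Printing Implicit Defensive.
Import GRing.Theory.

(* A category (Leibniz equality of morphisms) with a zero object and binary  *)
(* coproducts; together with the zero (hence initial) object this is exactly *)
(* "a category with a zero object and finite coproducts".                    *)
Record ZCat := {
  Obj : Type;
  CHom : Obj -> Obj -> Type;
  comp : forall {a b c : Obj}, CHom b c -> CHom a b -> CHom a c;
  idm : forall a : Obj, CHom a a;
  comp_assoc : forall (a b c d : Obj) (h : CHom c d) (g : CHom b c) (f : CHom a b),
      comp h (comp g f) = comp (comp h g) f;
  comp_id_l : forall (a b : Obj) (f : CHom a b), comp (idm b) f = f;
  comp_id_r : forall (a b : Obj) (f : CHom a b), comp f (idm a) = f;
  zero : Obj;
  from_zero : forall a : Obj, CHom zero a;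
  to_zero : forall a : Obj, CHom a zero;
  from_zero_uniq : forall (a : Obj) (f : CHom zero a), f = from_zero a;
  to_zero_uniq : forall (a : Obj) (f : CHom a zero), f = to_zero a;
  coprod : Obj -> Obj -> Obj;
  inl : forall a b : Obj, CHom a (coprod a b);
  inr : forall a b : Obj, CHom b (coprod a b);
  copair : forall {a b c : Obj}, CHom a c -> CHom b c -> CHom (coprod a b) c;
  copair_inl : forall (a b c : Obj) (f : CHom a c) (g : CHom b c),
      comp (copair f g) (inl a b) = f;
  copair_inr : forall (a b c : Obj) (f : CHom a c) (g : CHom b c),
      comp (copair f g) (inr a b) = g;
  copair_uniq : forall (a b c : Obj) (h : CHom (coprod a b) c),
      h = copair (comp h (inl a b)) (comp h (inr a b))
}.

Arguments CHom : clear implicits.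
Arguments comp {z a b c}.
Arguments idm {z}.
Arguments from_zero {z}.
Arguments to_zero {z}.
Arguments coprod {z}.
Arguments inl {z}.
Arguments inr {z}.
Arguments copair {z a b c}.
Arguments zero {z}.

(* 2^k, written so that pow2 k.+1 is definitionally pow2 k * 2 *)
Fixpoint pow2 (k : nat) : nat := match k with 0 => 1 | S k' => pow2 k' * 2 end.

(* Pointed maps [n] -> [m] are represented by functions nat -> nat; only the
   values on {1,...,n} matter, and 0 |-> 0. *)
Definition pmap_p (i : nat) : nat -> nat :=
  fun j => if j < i then j else if j == i then 0 else j.-1.
(* s^n_{i,j,k}  (for 1 <= i < j <= n, 1 <= k <= n-1) *)
Definition pmap_s (i j k : nat) : nat -> nat :=
  fun m => if m == 0 then 0 else if (m == i) || (m == j) then k else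
           let q := m - (i < m) - (j < m) in if q < k then q else q.+1.
Definition pmap_d (j : nat) : nat -> nat := fun m => if m < j then m else m.+1.
Definition swap12 : nat -> nat :=
  fun m => if m == 1 then 2 else if m == 2 then 1 else m.

Fixpoint popc_aux (fuel n : nat) : nat :=
  match fuel with 0 => 0 | S f => odd n + popc_aux f n./2 end.
Definition popcount (n : nat) : nat := popc_aux n n.
Definition inAplus (i : nat) : bool := ~~ odd (popcount i.-1).

Definition special_perm (N : nat) (sigma : nat -> nat) : Prop :=
  [/\ sigma 0 = 0,
      (forall i, 0 < i <= N -> 0 < sigma i <= N),
      (forall i j, 0 < i <= N -> 0 < j <= N -> sigma i = sigma j -> i = j) &
      (forall i, 0 < i <= N -> inAplus (sigma i) = inAplus i)].

Section Gamma.
Variable C : ZCat.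
Variable X : Obj C.

Definition zmap (a b : Obj C) : CHom C a b := comp (from_zero b) (to_zero a).

(* powS k = X /\ [k+1] = X |_| ... |_| X  (k+1 copies) *)
Fixpoint powS (k : nat) : Obj C :=
  match k with 0 => X | S k' => coprod (powS k') X end.
(* pow k = X /\ [k]; X /\ [0] = 0, X /\ [1] = X *)
Definition pow (k : nat) : Obj C :=
  match k with 0 => zero | S k' => powS k' end.

(* the i-th coproduct inclusion X -> X /\ [k] (zero map if i = 0 or i > k) *)
Fixpoint incS (k : nat) (i : nat) : CHom C X (powS k) :=
  match k return CHom C X (powS k) with
  | 0 => if i == 1 then idm X else zmap X X
  | S k' => if i == k'.+2 then inr (powS k') X
            else comp (inl (powS k') X) (incS k' i)
  end.
Definition inc (k i : nat) : CHom C X (pow k) :=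
  match k return CHom C X (pow k) with 0 => zmap X zero | S k' => incS k' i end.

Fixpoint cotS (Y : Obj C) (k : nat) (g : nat -> CHom C X Y) : CHom C (powS k) Y :=
  match k return CHom C (powS k) Y with
  | 0 => g 1
  | S k' => copair (cotS Y k' g) (g k'.+2)
  end.
Definition cot (Y : Obj C) (k : nat) (g : nat -> CHom C X Y) : CHom C (pow k) Y :=
  match k return CHom C (pow k) Y with 0 => from_zero Y | S k' => cotS Y k' g end.

(* Gamma-space structure of End_C(X): End(X)[k] = CHom(X, X /\ [k]);
   a pointed map f : [k] -> [l] acts by postcomposition with X /\ f *)
Definition act (k l : nat) (f : nat -> nat) (x : CHom C X (pow k)) : CHom C X (pow l) :=
  comp (cot (pow l) k (fun i => inc l (f i))) x.

(* multiplication x * y = (x /\ [l]) o y, with [k] /\ [l] = [kl],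
   i /\ j |-> (j-1)k + i *)
Definition mul (k l : nat) (x : CHom C X (pow k)) (y : CHom C X (pow l))
  : CHom C X (pow (k * l)) :=
  comp (cot (pow (k * l)) l
          (fun j => comp (cot (pow (k * l)) k (fun i => inc (k * l) (j.-1 * k + i))) x))
       y.

Fixpoint rpowS (r : CHom C X (pow 2)) (k : nat) : CHom C X (pow (pow2 k.+1)) :=
  match k return CHom C X (pow (pow2 k.+1)) with
  | 0 => r
  | S k' => mul (pow2 k'.+1) 2 (rpowS r k') r
  end.
Definition rpow (r : CHom C X (pow 2)) (k : nat) : CHom C X (pow (pow2 k)) :=
  match k return CHom C X (pow (pow2 k)) with 0 => idm X | S k' => rpowS r k' end.

Definition is_fdl (r : CHom C X (pow 2)) : Prop :=
  [/\ act 2 1 (pmap_p 2) r = idm X /\ act 2 1 (pmap_s 1 2 1) r = zmap X X,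
      mul 1 2 (act 2 1 (pmap_p 1) r) r = act 2 2 swap12 r /\
      mul 2 1 r (act 2 1 (pmap_p 1) r) = act 2 2 swap12 r,
      (forall (k : nat) (sigma : nat -> nat), 0 < k -> special_perm (pow2 k) sigma ->
          act (pow2 k) (pow2 k) sigma (rpow r k) = rpow r k) &
      (forall k i j l : nat, 0 < k -> 0 < i -> i < j -> j <= pow2 k ->
          inAplus i != inAplus j -> 0 < l -> l <= (pow2 k).-1 ->
          act (pow2 k) (pow2 k).-1 (pmap_s i j l) (rpow r k) =
          act (pow2 k).-2 (pow2 k).-1 (pmap_d l)
            (act (pow2 k).-1 (pow2 k).-2 (pmap_p i)
               (act (pow2 k) (pow2 k).-1 (pmap_p j) (rpow r k))))].

Definition is_abelian_cogroup (w : CHom C X (coprod X X)) (e : CHom C X zero)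
    (nu : CHom C X X) : Prop :=
  [/\ comp (copair (comp (from_zero X) e) (idm X)) w = idm X /\
      comp (copair (idm X) (comp (from_zero X) e)) w = idm X,
      comp (copair (comp (inl (coprod X X) X) w) (inr (coprod X X) X)) w =
      comp (copair (comp (inl (coprod X X) X) (inl X X))
                   (comp (copair (comp (inl (coprod X X) X) (inr X X))
                                 (inr (coprod X X) X)) w)) w,
      comp (copair (idm X) nu) w = comp (from_zero X) e /\
      comp (copair nu (idm X)) w = comp (from_zero X) e &
      comp (copair (inr X X) (inl X X)) w = w].

Definition hadd (Y : Obj C) (w : CHom C X (coprod X X)) (f g : CHom C X Y) : CHom C X Y :=
  comp (copair f g) w.
Definition zsmul (Y : Obj C) (w : CHom C X (coprod X X)) (nu : CHom C X X)
    (z : int) (f : CHom C X Y) : CHom C X Y :=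
  match z with
  | Posz n => iter n (hadd Y w f) (zmap X Y)
  | Negz n => iter n.+1 (hadd Y w (comp f nu)) (zmap X Y)
  end.
(* the additive extension Z~[k] -> CHom(X, X /\ [k]) of i |-> i-th inclusion;
   an element of Z~[k] is a coefficient function a (only a 1, ..., a k used) *)
Definition Phi (w : CHom C X (coprod X X)) (nu : CHom C X X) (k : nat)
    (a : nat -> int) : CHom C X (pow k) :=
  foldr (fun i acc => hadd (pow k) w (zsmul (pow k) w nu (a i) (inc k i)) acc)
        (zmap X (pow k)) (iota 1 k).

End Gamma.

Arguments zmap {C}.
Arguments pow {C}.
Arguments inc {C}.
Arguments act {C}.
Arguments mul {C}.
Arguments rpow {C X}.
Arguments is_fdl {C X}.
Arguments is_abelian_cogroup {C X}.
Arguments Phi {C X}.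

(* H Z: elements of H Z[k] = Z~[k] as coefficient functions nat -> int *)
Definition hzact (N : nat) (f : nat -> nat) (a : nat -> int) : nat -> int :=
  fun j => (\sum_(1 <= i < N.+1 | f i == j) a i)%R.
Definition hzmul (k l : nat) (a b : nat -> int) : nat -> int :=
  fun m => if (0 < m <= k * l)%N
           then (a ((m.-1 %% k).+1) * b ((m.-1 %/ k).+1))%R else 0%R.
Definition hz_unit : nat -> int := fun m => if m == 1 then 1%R else 0%R.
Definition hz_pm1_gen : nat -> int :=
  fun m => if m == 1 then 1%R else if m == 2 then (-1)%R else 0%R.
Fixpoint pm1 (n : nat) : nat -> int :=
  match n with 0 => hz_unit | S n' => hzmul (pow2 n') 2 (pm1 n') hz_pm1_gen end.

(* Write D f g := [f, g] o r for f, g : X -> Y.  The counit axioms (1) of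
   r give D f 0 = f and D f f = 0, and invariance of r^2 under the special
   action (for the permutations (2 3) and (1 4) of {1,...,4}) gives the
   "medial" and "swap" identities of x - y.  These four identities alone make
   any pointed set carrying such a D an abelian group with x + y := D x (D 0 y); this
   algebraic fact is proved first, for an abstract operation D.
   Hence every Hom(X, Y) is an abelian group, naturally in Y, and
   w = p^3_2 p^4_2 (r^2) satisfies [f, g] o w = f + g while nu = p^2_1(r)
   satisfies f o nu = - f: specialising to the identity and coproduct
   inclusions yields the abelian cogroup axioms.  For the second claim,
   induction on n shows [g_1, ..., g_N] o r^n = sum_i (pm1 n i) g_i (with
   N = 2^n), and the value of Phi on hzact f (pm1 n) is regrouped into the
   same sum. *)

From HB Require Import structures.
From mathcomp Require Import all_boot all_order all_algebra.
From mathcomp Require Import boolp zify.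
Import GRing.Theory.

Section CoproductCalculus.
Variable C : ZCat.

Lemma comp_copair (a b c d : Obj C) (h : CHom C c d) (f : CHom C a c) (g : CHom C b c) :
  comp h (copair f g) = copair (comp h f) (comp h g).
Proof.
by rewrite (copair_uniq C _ _ _ (comp h (copair f g))) -!comp_assoc copair_inl copair_inr.
Qed.

Lemma copair_inl_inr (a b : Obj C) : copair (inl a b) (inr a b) = idm (coprod a b).
Proof. by rewrite (copair_uniq C _ _ _ (idm _)) !comp_id_l. Qed.

Lemma comp_zmap (a b c : Obj C) (h : CHom C b c) : comp h (zmap a b) = zmap a c.
Proof. by rewrite /zmap comp_assoc (from_zero_uniq C _ (comp h _)). Qed.

End CoproductCalculus.

Section Cotuples.
Variables (C : ZCat) (X : Obj C).

Lemma cot_inc (Y : Obj C) (k : nat) (g : nat -> CHom C X Y) (i : nat) :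
  comp (cot C X Y k g) (inc X k i) = if 0 < i <= k then g i else zmap X Y.
Proof.
case: k => [|k] /=; first by rewrite comp_zmap; case: i.
elim: k => [|k IH] /=; first by case: i => [|[|i]] /=; rewrite ?comp_id_r ?comp_zmap.
case: ifP => [/eqP->|ne]; first by rewrite copair_inr ltnSn.
by rewrite comp_assoc copair_inl IH [i <= k.+2]leq_eqVlt ne.
Qed.

Lemma comp_cot (Y Z : Obj C) (k : nat) (g : nat -> CHom C X Y) (h : CHom C Y Z) :
  comp h (cot C X Y k g) = cot C X Z k (fun i => comp h (g i)).
Proof.
case: k => [|k] /=; first by rewrite (from_zero_uniq C _ (comp h _)).
by elim: k => [|k IH] //=; rewrite comp_copair IH.
Qed.

Lemma eq_cot (Y : Obj C) (k : nat) (g1 g2 : nat -> CHom C X Y) :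
  (forall i, 0 < i <= k -> g1 i = g2 i) -> cot C X Y k g1 = cot C X Y k g2.
Proof.
case: k => [|k] //=; elim: k => [|k IH] eq_g /=; first by rewrite eq_g.
rewrite IH ?eq_g ?leqnn // => i /andP[i_gt0 i_le].
by apply: eq_g; rewrite i_gt0 (leq_trans i_le).
Qed.

Lemma cot_act (Y : Obj C) (k l : nat) (f : nat -> nat) (x : CHom C X (pow X k))
    (g : nat -> CHom C X Y) :
  comp (cot C X Y l g) (act X k l f x) =
  comp (cot C X Y k (fun i => if 0 < f i <= l then g (f i) else zmap X Y)) x.
Proof.
rewrite /act comp_assoc comp_cot; congr comp.
by apply: eq_cot => i _; rewrite cot_inc.
Qed.

Lemma cot_mul (Y : Obj C) (k l : nat) (x : CHom C X (pow X k)) (y : CHom C X (pow X l))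
    (g : nat -> CHom C X Y) :
  comp (cot C X Y (k * l) g) (mul X k l x y) =
  comp (cot C X Y l (fun j => comp (cot C X Y k (fun i => g (j.-1 * k + i))) x)) y.
Proof.
rewrite /mul comp_assoc comp_cot; congr comp; apply: eq_cot => j /andP[j_gt0 j_le].
rewrite comp_assoc comp_cot; congr comp; apply: eq_cot => i /andP[i_gt0 i_le].
rewrite cot_inc; case: ifP => // /negP[]; apply/andP; split; first by rewrite addn_gt0 i_gt0 orbT.
case: j j_gt0 j_le => // j _ j_le /=; nia.
Qed.

Lemma inc0 (k : nat) : inc X k 0 = zmap X (pow X k).
Proof. by case: k => // k /=; elim: k => // k IH /=; rewrite IH comp_zmap. Qed.

End Cotuples.

Arguments cot_act {C X Y k} l f x g.
Arguments cot_mul {C X Y k l} x y g.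

Section DifferenceGroup.
Variables (T : Type) (z : T) (D : T -> T -> T).
Hypothesis D_x0 : forall x, D x z = x.
Hypothesis D_xx : forall x, D x x = z.
Hypothesis D_medial : forall a b c e, D (D a c) (D b e) = D (D a b) (D c e).
Hypothesis D_swap : forall a b c e, D (D e b) (D c a) = D (D a b) (D c e).

Definition dopp (x : T) : T := D z x.
Definition dadd (x y : T) : T := D x (dopp y).

Lemma doppK : involutive dopp.
Proof. by move=> x; rewrite /dopp -{1}(D_xx x) D_medial D_xx !D_x0. Qed.

Lemma daddA : associative dadd.
Proof.
move=> x y u; have oppK v : D z (D z v) = v := doppK v.
rewrite /dadd /dopp -{1}(D_x0 x) -D_medial; congr D.
by rewrite -{1}(D_xx z) D_medial oppK.
Qed.

Lemma daddC : commutative dadd.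
Proof. by move=> x y; rewrite /dadd /dopp -{1}(D_x0 x) -D_swap D_x0. Qed.

Lemma dadd0 : left_id z dadd.
Proof. exact: doppK. Qed.

Lemma daddN : left_inverse z dopp dadd.
Proof. by move=> x; rewrite /dadd D_xx. Qed.

Lemma D_subE (x y : T) : D x y = dadd x (dopp y).
Proof. by rewrite /dadd doppK. Qed.

End DifferenceGroup.

Arguments dopp {T} z D x.
Arguments dadd {T} z D x y.
Arguments daddA {T z D}.
Arguments daddC {T z D}.
Arguments dadd0 {T z D}.
Arguments daddN {T z D}.
Arguments D_subE {T z D}.

Section DifferenceLaw.
Variables (C : ZCat) (X : Obj C) (r : CHom C X (pow X 2)).
Hypothesis fdl : is_fdl r.

Definition rdiff {Y : Obj C} (f g : CHom C X Y) : CHom C X Y := comp (copair f g) r.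

Lemma cot_r (Y : Obj C) (g : nat -> CHom C X Y) :
  comp (cot C X Y 2 g) r = rdiff (g 1) (g 2).
Proof. by []. Qed.

Lemma comp_rdiff (Y Z : Obj C) (h : CHom C Y Z) (f g : CHom C X Y) :
  comp h (rdiff f g) = rdiff (comp h f) (comp h g).
Proof. by rewrite /rdiff comp_assoc comp_copair. Qed.

(* Counit axiom p^2_2(r) = 1. *)
Lemma rdiff_x0 (Y : Obj C) (f : CHom C X Y) : rdiff f (zmap X Y) = f.
Proof.
case: fdl => [[p2r _] _ _ _].
have := cot_act 1 (pmap_p 2) r (fun _ => f); rewrite p2r comp_id_r /=.
by rewrite /rdiff => <-.
Qed.

(* Counit axiom s^2_{1,2,1}(r) = 0. *)
Lemma rdiff_xx (Y : Obj C) (f : CHom C X Y) : rdiff f f = zmap X Y.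
Proof.
case: fdl => [[_ s2r] _ _ _].
have := cot_act 1 (pmap_s 1 2 1) r (fun _ => f); rewrite s2r comp_zmap /=.
by rewrite /rdiff => <-.
Qed.

Lemma cot_rpow2 (Y : Obj C) (g : nat -> CHom C X Y) :
  comp (cot C X Y 4 g) (rpow r 2) = rdiff (rdiff (g 1) (g 2)) (rdiff (g 3) (g 4)).
Proof. exact: (cot_mul r r g). Qed.

Definition swap23 (m : nat) : nat := if m == 2 then 3 else if m == 3 then 2 else m.
Definition swap14 (m : nat) : nat := if m == 1 then 4 else if m == 4 then 1 else m.

(* (2 3) and (1 4) preserve A_+ = {1, 4} and A_- = {2, 3} in [4]. *)
Lemma special_swap23 : special_perm 4 swap23.
Proof.
split=> //; first (by move=> [|[|[|[|[|i]]]]]); last by move=> [|[|[|[|[|i]]]]].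
by move=> [|[|[|[|[|i]]]]] [|[|[|[|[|j]]]]].
Qed.

Lemma special_swap14 : special_perm 4 swap14.
Proof.
split=> //; first (by move=> [|[|[|[|[|i]]]]]); last by move=> [|[|[|[|[|i]]]]].
by move=> [|[|[|[|[|i]]]]] [|[|[|[|[|j]]]]].
Qed.

Lemma cot_rpow2_special (Y : Obj C) (sigma : nat -> nat) (g : nat -> CHom C X Y) :
  special_perm 4 sigma ->
  comp (cot C X Y 4 (fun i => if 0 < sigma i <= 4 then g (sigma i) else zmap X Y))
       (rpow r 2) = comp (cot C X Y 4 g) (rpow r 2).
Proof.
case: fdl => [_ _ special _] sp.
by rewrite -cot_act (special 2 sigma).
Qed.

Definition quadruple {Y : Obj C} (a b c e : CHom C X Y) (i : nat) : CHom C X Y :=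
  if i == 1 then a else if i == 2 then b else if i == 3 then c else e.

Lemma rdiff_medial (Y : Obj C) (a b c e : CHom C X Y) :
  rdiff (rdiff a c) (rdiff b e) = rdiff (rdiff a b) (rdiff c e).
Proof.
by have := cot_rpow2_special _ _ (quadruple a b c e) special_swap23; rewrite !cot_rpow2.
Qed.

Lemma rdiff_swap (Y : Obj C) (a b c e : CHom C X Y) :
  rdiff (rdiff e b) (rdiff c a) = rdiff (rdiff a b) (rdiff c e).
Proof.
by have := cot_rpow2_special _ _ (quadruple a b c e) special_swap14; rewrite !cot_rpow2.
Qed.

Definition hom_add {Y : Obj C} := dadd (zmap X Y) (@rdiff Y).
Definition hom_opp {Y : Obj C} := dopp (zmap X Y) (@rdiff Y).

Lemma hom_addA (Y : Obj C) : associative (@hom_add Y).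
Proof. exact: daddA (@rdiff_x0 Y) (@rdiff_xx Y) (@rdiff_medial Y). Qed.

Lemma hom_addC (Y : Obj C) : commutative (@hom_add Y).
Proof. exact: daddC (@rdiff_x0 Y) (@rdiff_swap Y). Qed.

Lemma hom_add0 (Y : Obj C) : left_id (zmap X Y) (@hom_add Y).
Proof. exact: dadd0 (@rdiff_x0 Y) (@rdiff_xx Y) (@rdiff_medial Y). Qed.

Lemma hom_addN (Y : Obj C) : left_inverse (zmap X Y) (@hom_opp Y) (@hom_add Y).
Proof. exact: daddN (@rdiff_xx Y). Qed.

Lemma rdiff_subE (Y : Obj C) (f g : CHom C X Y) : rdiff f g = hom_add f (hom_opp g).
Proof. exact: (D_subE (@rdiff_x0 Y) (@rdiff_xx Y) (@rdiff_medial Y) f g). Qed.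

Definition w := act X 3 2 (pmap_p 2) (act X 4 3 (pmap_p 2) (rpow r 2)).
Definition nu := act X 2 1 (pmap_p 1) r.

Lemma copair_w (Y : Obj C) (f g : CHom C X Y) : comp (copair f g) w = hom_add f g.
Proof.
change (comp (cot C X Y 2 (fun i => if i == 1 then f else g)) w = hom_add f g).
by rewrite /w !cot_act cot_rpow2 /= rdiff_x0.
Qed.

Lemma comp_nu (Y : Obj C) (f : CHom C X Y) : comp f nu = hom_opp f.
Proof. exact: (cot_act 1 (pmap_p 1) r (fun _ => f)). Qed.

(* Postcomposition is additive, since r acts on the source X only. *)
Lemma comp_hom_add (Y Z : Obj C) (h : CHom C Y Z) (f g : CHom C X Y) :
  comp h (hom_add f g) = hom_add (comp h f) (comp h g).
Proof. by rewrite /hom_add /dadd /dopp !comp_rdiff comp_zmap. Qed.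

Lemma wE : w = hom_add (inl X X) (inr X X).
Proof. by rewrite -copair_w copair_inl_inr comp_id_l. Qed.

Lemma nuE : nu = hom_opp (idm X).
Proof. by rewrite -comp_nu comp_id_l. Qed.

Lemma fdl_abelian_cogroup : is_abelian_cogroup w (to_zero X) nu.
Proof.
have zeroE : comp (from_zero X) (to_zero X) = zmap X X by [].
split.
- by rewrite zeroE !copair_w hom_add0 hom_addC hom_add0.
- by rewrite !copair_w wE !comp_hom_add hom_addA.
- by rewrite zeroE !copair_w nuE hom_addN hom_addC hom_addN.
- by rewrite copair_w wE hom_addC.
Qed.

End DifferenceLaw.

Arguments w {C X} r.
Arguments nu {C X} r.
Arguments cot_r {C X r Y} g.
Arguments rdiff_subE {C X r} fdl {Y}.
Arguments copair_w {C X r} fdl {Y}.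
Arguments comp_nu {C X r Y}.
Arguments hom_add {C X r Y}.
Arguments hom_opp {C X r Y}.

Definition HomZ (C : ZCat) (X : Obj C) (r : CHom C X (pow X 2)) (fdl : is_fdl r)
    (Y : Obj C) : Type := CHom C X Y.
HB.instance Definition _ C X r fdl Y := gen_eqMixin (@HomZ C X r fdl Y).
HB.instance Definition _ C X r fdl Y := gen_choiceMixin (@HomZ C X r fdl Y).
HB.instance Definition _ C X r fdl Y := GRing.isZmodule.Build (@HomZ C X r fdl Y)
   (@hom_addA C X r fdl Y) (@hom_addC C X r fdl Y)
   (@hom_add0 C X r fdl Y) (@hom_addN C X r fdl Y).

Local Open Scope ring_scope.

Lemma pow2_gt0 (n : nat) : (0 < pow2 n)%N.
Proof. by elim: n => //= n IH; rewrite muln_gt0 IH. Qed.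

Lemma pm1S_low (n i : nat) : (0 < i <= pow2 n)%N -> pm1 n.+1 i = pm1 n i.
Proof.
move=> /andP[i_gt0 i_le]; rewrite /= /hzmul.
have -> : (0 < i <= pow2 n * 2)%N by lia.
by rewrite modn_small ?divn_small ?prednK ?mulr1 //; lia.
Qed.

Lemma pm1S_high (n i : nat) : (0 < i <= pow2 n)%N -> pm1 n.+1 (i + pow2 n) = - pm1 n i.
Proof.
move=> /andP[i_gt0 i_le]; rewrite /= /hzmul.
have -> : (0 < i + pow2 n <= pow2 n * 2)%N by lia.
have -> : (i + pow2 n).-1 = (i.-1 + pow2 n)%N by lia.
rewrite modnDr divnDr ?dvdnn // divnn pow2_gt0 modn_small ?divn_small; try lia.
by rewrite prednK //= mulrN1.
Qed.

Section Expansion.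
Variables (C : ZCat) (X : Obj C) (r : CHom C X (pow X 2)).
Hypothesis fdl : is_fdl r.
Notation HomZ := (@HomZ C X r fdl).

Lemma hom_addE (Y : Obj C) (f g : HomZ Y) : @hom_add C X r Y f g = f + g.
Proof. by []. Qed.

Lemma hom_oppE (Y : Obj C) (f : HomZ Y) : @hom_opp C X r Y f = - f.
Proof. by []. Qed.

(* Unfolding r^(n+1) = r^n r also in the degenerate case n = 0. *)
Lemma rpowS (n : nat) : rpow r n.+1 = mul X (pow2 n) 2 (rpow r n) r.
Proof. by case: n => //=; rewrite /mul /= !comp_id_r copair_inl_inr comp_id_l. Qed.

Lemma cot_rpow (Y : Obj C) (g : nat -> CHom C X Y) (n : nat) :
  (comp (cot C X Y (pow2 n) g) (rpow r n) : HomZ Y) =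
  \sum_(1 <= i < (pow2 n).+1) (g i : HomZ Y) *~ pm1 n i.
Proof.
elim: n g => [|n IH] g; first by rewrite big_nat1 /= comp_id_r.
rewrite rpowS [pow2 n.+1]/= cot_mul cot_r (rdiff_subE fdl) !IH hom_addE hom_oppE.
have N_gt0 := pow2_gt0 n.
rewrite [RHS](big_cat_nat _ (n := (pow2 n).+1)); try lia.
congr (_ + _); first by apply: eq_big_nat => i i_in; rewrite mul0n add0n pm1S_low.
rewrite -[(pow2 n).+1]add1n big_addn -sumrN.
have -> : ((pow2 n * 2).+1 - pow2 n = (pow2 n).+1)%N by lia.
apply: eq_big_nat => i i_in; have -> : (1 * pow2 n + i = i + pow2 n)%N by lia.
by rewrite pm1S_high // mulrNz.
Qed.

Lemma zsmulE (Y : Obj C) (m : int) (f : HomZ Y) : zsmul C X Y (w r) (nu r) m f = f *~ m.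
Proof.
have haddE (u v : HomZ Y) : hadd C X Y (w r) u v = u + v by rewrite /hadd (copair_w fdl).
case: m => m; first by elim: m => //= m IH; rewrite haddE IH -mulrS.
rewrite /= comp_nu NegzE mulrNz.
elim: m => [|m IH]; first by rewrite /= haddE addr0.
by rewrite iterS haddE IH -opprD -mulrS.
Qed.

Lemma PhiE (k : nat) (a : nat -> int) :
  Phi (w r) (nu r) k a = \sum_(j <- iota 1 k) (inc X k j : HomZ (pow X k)) *~ a j.
Proof.
rewrite /Phi; elim: (iota 1 k) => [|j s IH] /=; first by rewrite big_nil.
by rewrite big_cons -IH /hadd (copair_w fdl) zsmulE.
Qed.

Lemma sum_inc_eq (k m : nat) (c : int) : (m <= k)%N ->
  \sum_(j <- iota 1 k | m == j) (inc X k j : HomZ (pow X k)) *~ c =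
  (inc X k m : HomZ (pow X k)) *~ c.
Proof.
move=> m_le; have [->|m_gt0] := posnP m.
  by rewrite big1 ?inc0 ?mul0rz // => j /eqP <-; rewrite inc0 mul0rz.
have select_m : [seq j <- iota 1 k | m == j] = [:: m].
  rewrite -(filter_pred1_uniq (iota_uniq 1 k)) ?mem_iota; last by lia.
  by apply: eq_filter => j; rewrite /= eq_sym.
by rewrite -big_filter select_m big_seq1.
Qed.

Lemma Phi_hzact_pm1 (n k : nat) (f : nat -> nat) :
  (forall i, (i <= pow2 n)%N -> (f i <= k)%N) ->
  Phi (w r) (nu r) k (hzact (pow2 n) f (pm1 n)) = act X (pow2 n) k f (rpow r n).
Proof.
move=> f_le; rewrite PhiE /act (cot_rpow _ (fun i => inc X k (f i))) /hzact.
under eq_bigr => j _ do rewrite mulrz_sumr big_mkcond.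
rewrite exchange_big /=; apply: eq_big_nat => i i_in.
by rewrite -big_mkcond sum_inc_eq // f_le; lia.
Qed.

End Expansion.

Local Close Scope ring_scope.

Theorem mainTheorem12 (C : ZCat) (X : Obj C) (r : CHom C X (pow X 2)) :
  is_fdl r ->
  let w := act X 3 2 (pmap_p 2) (act X 4 3 (pmap_p 2) (rpow r 2)) in
  let nu := act X 2 1 (pmap_p 1) r in
  is_abelian_cogroup w (to_zero X) nu /\
  (forall (n k : nat) (f : nat -> nat),
     f 0 = 0 -> (forall i, i <= pow2 n -> f i <= k) ->
     Phi w nu k (hzact (pow2 n) f (pm1 n)) = act X (pow2 n) k f (rpow r n)).
Proof.
move=> fdl w nu; split; first exact: fdl_abelian_cogroup.
by move=> n k f _ f_le; apply: Phi_hzact_pm1.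
Qed.
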